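(* For every $Q\subset\mathrm{EX}(M)$, the space $Q(M)$ is separable.
   Context: Conventions: $M$ is an $n$-dimensional smooth manifold (Hausdorff, second countable) with maximal $C^\infty$ atlas $\mathcal{A}(M)$; every chart $\alpha$ has open domain $\mathrm{dom}(\alpha)\subset M$ and open range $\mathrm{ran}(\alpha)\subset\mathbb{R}^n$. For $A\subset\mathbb{R}^n$, $\partial A$ is its boundary in $\mathbb{R}^n$; for $A\subset U\subset\mathbb{R}^n$, $\partial_U A$ is the boundary of $A$ relative to $U$. An admissible boundary point of $\alpha$ is a $p\in\partial\,\mathrm{ran}(\alpha)$ such that every sequence $(x_i)\subset\mathrm{dom}(\alpha)$ with $\alpha(x_i)\to p$ has no accumulation point in $M$; $B(\alpha)$ is the set of these. An extension is a pair $(\alpha,U)$, $U\subset\mathbb{R}^n$ open, $\mathrm{ran}(\alpha)\subset U$, $\emptyset\ne\partial_U\mathrm{ran}(\alpha)\subset B(\alpha)$; $\mathrm{EX}(M)$ is the set of extensions. A boundary set is $(\alpha,U,V)$ with $(\alpha,U)\in\mathrm{EX}(M)$, $V\subset B(\alpha)\cap U$ (a boundary point if $V=\{p\}$). $(\alpha,U,V)$ covers $(\beta,X,Y)$ if for every sequence $(y_i)\subset\mathrm{dom}(\beta)$ with $(\beta(y_i))$ having an accumulation point in $Y$ there is a subsequence $(v_i)\subset\mathrm{dom}(\alpha)$ of $(y_i)$ with $(\alpha(v_i))$ having an accumulation point in $V$; they are equivalent, $\equiv$, if each covers the other. Completion: for $Q\subset\mathrm{EX}(M)$ let $P=\{(\alpha,\mathrm{ran}(\alpha)):\alpha\in\mathcal{A}(M)\}$,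 $S_Q=P\cup Q$, $N_{(\alpha,U)}=\mathrm{ran}(\alpha)\cup\partial_U\mathrm{ran}(\alpha)$ with subspace topology of $\mathbb{R}^n$, $N_Q=\bigsqcup_{(\alpha,U)\in S_Q}N_{(\alpha,U)}$ with disjoint-union topology. Identify $x\in N_{(\alpha,U)}$ with $y\in N_{(\beta,X)}$ iff either $x\in\mathrm{ran}(\alpha)$, $y\in\mathrm{ran}(\beta)$, $\beta\circ\alpha^{-1}(x)=y$, or $x\in\partial_U\mathrm{ran}(\alpha)$, $y\in\partial_X\mathrm{ran}(\beta)$, $(\alpha,U,\{x\})\equiv(\beta,X,\{y\})$. $Q(M)$ is the quotient space with the quotient topology and $q:N_Q\to Q(M)$ the quotient map. *)

From HB Require Import structures.
From mathcomp Require Import all_boot all_order all_algebra generic_quotient.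
From mathcomp Require Import all_classical all_reals all_analysis.

Set Implicit Arguments.
Unset Strict Implicit.
Unset Printing Implicit Defensive.
Import Order.TTheory GRing.Theory Num.Theory.
Local Open Scope classical_set_scope.
Local Open Scope ring_scope.

Definition acc_point {T : topologicalType} (u : nat -> T) (y : T) : Prop :=
  forall W, nbhs y W -> forall N : nat, exists i : nat, (N <= i)%N /\ W (u i).

Definition boundary {T : topologicalType} (A : set T) : set T :=
  closure A `\` interior A.

(* Boundary of A relative to the (open) set U containing A:
   relative closure minus relative interior; for U open the relative
   interior of A in U is the interior of A. *)
Definition rel_boundary {T : topologicalType} (U A : set T) : set T :=
  (closure A `&` U) `\` interior A.

Definition separable_space (T : topologicalType) : Prop :=
  exists D : set T, countable D /\ dense D.

Definition Rn (R : realType) (n : nat) : normedModType R := 'rV[R]_n.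

Section Smooth.
Context {R : realType} {n : nat}.
Local Notation V := (Rn R n).

Fixpoint iter_dderiv (vs : seq V) (f : V -> V) : V -> V :=
  match vs with
  | [::] => f
  | v :: vs' => fun x => derive (iter_dderiv vs' f) x v
  end.

(* f is C^oo on the open set U: all iterated directional (in particular
   all partial) derivatives of all orders exist on U and are continuous on U. *)
Definition smooth_on (U : set V) (f : V -> V) : Prop :=
  (forall (vs : seq V) (v x : V), U x -> derivable (iter_dderiv vs f) x v) /\
  (forall vs : seq V, {within U, continuous (iter_dderiv vs f)}).
End Smooth.

Section Charts.
Context {R : realType} {n : nat} {M : topologicalType}.
Local Notation V := (Rn R n).

Record chart := Chart {
  ch_fun : M -> V;
  ch_inv : V -> M;
  ch_dom : set M;
  ch_ran : set V }.

HB.instance Definition _ := gen_eqMixin chart.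
HB.instance Definition _ := gen_choiceMixin chart.

Definition is_chart (a : chart) : Prop :=
  open (ch_dom a) /\ open (ch_ran a) /\
  ch_fun a @` ch_dom a = ch_ran a /\
  (forall x, ch_dom a x -> ch_inv a (ch_fun a x) = x) /\
  (forall y, ch_ran a y -> ch_dom a (ch_inv a y) /\ ch_fun a (ch_inv a y) = y) /\
  {within ch_dom a, continuous (ch_fun a)} /\
  {within ch_ran a, continuous (ch_inv a)}.

Definition smooth_transition (a b : chart) : Prop :=
  smooth_on (ch_fun a @` (ch_dom a `&` ch_dom b)) (ch_fun b \o ch_inv a).

Definition compatible (a b : chart) : Prop :=
  smooth_transition a b /\ smooth_transition b a.

Definition maximal_smooth_atlas (A : set chart) : Prop :=
  [/\ (forall a, A a -> is_chart a),
      (forall x : M, exists2 a, A a & ch_dom a x),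
      (forall a b, A a -> A b -> compatible a b) &
      (forall b, is_chart b -> (forall a, A a -> compatible a b) -> A b)].
End Charts.
Arguments chart {R n} M.

Section Extensions.
Context {R : realType} {n : nat} {M : topologicalType}.
Local Notation V := (Rn R n).
Local Notation chart := (@chart R n M).
Variable A : set chart.

Definition admissible_boundary (a : chart) : set V :=
  [set p | boundary (ch_ran a) p /\
     forall u : nat -> M, (forall i, ch_dom a (u i)) ->
       (ch_fun a \o u) @ \oo --> p ->
       forall y : M, ~ acc_point u y].

Definition extension (e : chart * set V) : Prop :=
  let: (a, U) := e in
  [/\ A a, open U, ch_ran a `<=` U,
      rel_boundary U (ch_ran a) !=set0 &
      rel_boundary U (ch_ran a) `<=` admissible_boundary a].

Definition boundary_set (a : chart) (U W : set V) : Prop :=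
  extension (a, U) /\ W `<=` admissible_boundary a `&` U.

Definition covers (a : chart) (U W : set V) (b : chart) (X Y : set V) : Prop :=
  forall y : nat -> M, (forall i, ch_dom b (y i)) ->
    (exists2 p, Y p & acc_point (ch_fun b \o y) p) ->
    exists phi : nat -> nat,
      (forall i, (phi i < phi i.+1)%N) /\
      (forall i, ch_dom a (y (phi i))) /\
      exists2 p, W p & acc_point (ch_fun a \o (y \o phi)) p.

Definition bs_equiv (a : chart) (U W : set V) (b : chart) (X Y : set V) :=
  covers a U W b X Y /\ covers b X Y a U W.
End Extensions.

Section Completion.
Context {R : realType} {n : nat} {M : topologicalType}.
Local Notation V := (Rn R n).
Local Notation chart := (@chart R n M).
Variables (A : set chart) (Q : set (chart * set V)).

Definition Pset : set (chart * set V) := [set (a, ch_ran a) | a in A].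

Definition SQ : set (chart * set V) := Pset `|` Q.

Definition Npiece (s : chart * set V) : set V :=
  ch_ran s.1 `|` rel_boundary s.2 (ch_ran s.1).

Record SQ_index := SQI { sq_val : chart * set V; sq_mem : SQ sq_val }.
HB.instance Definition _ := gen_eqMixin SQ_index.
HB.instance Definition _ := gen_choiceMixin SQ_index.
Definition Npiece_top (i : SQ_index) : topologicalType :=
  set_type (Npiece (sq_val i)).
Definition NQ : topologicalType := {i : SQ_index & Npiece_top i}.

Definition NQ_index (z : NQ) : chart * set V := sq_val (projT1 z).
Definition NQ_point (z : NQ) : V := val (projT2 z).

Definition ident (z w : NQ) : Prop :=
  let: (a, U) := NQ_index z in
  let: (b, X) := NQ_index w in
  let x := NQ_point z in
  let y := NQ_point w in
  (ch_ran a x /\ ch_ran b y /\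
     ch_dom b (ch_inv a x) /\ (ch_fun b \o ch_inv a) x = y)
  \/
  (rel_boundary U (ch_ran a) x /\ rel_boundary X (ch_ran b) y /\
     bs_equiv a U [set x] b X [set y]).

Definition ident_eq (z w : NQ) : Prop :=
  forall E : NQ -> NQ -> Prop,
    (forall u, E u u) -> (forall u v, E u v -> E v u) ->
    (forall u v t, E u v -> E v t -> E u t) ->
    (forall u v, ident u v -> E u v) -> E z w.

Definition ident_rel : rel NQ := fun z w => `[< ident_eq z w >].

Lemma ident_rel_refl : reflexive ident_rel.
Proof. by move=> z; apply/asboolP; rewrite /ident_eq => E r _ _ _; exact: r. Qed.

Lemma ident_rel_sym : symmetric ident_rel.
Proof.
have h z w : ident_rel z w -> ident_rel w z.
  move/asboolP => H; apply/asboolP; rewrite /ident_eq => E r s t i; exact: (s _ _ (H E r s t i)).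
by move=> z w; apply/idP/idP; exact: h.
Qed.

Lemma ident_rel_trans : transitive ident_rel.
Proof.
move=> z w t /asboolP H1 /asboolP H2; apply/asboolP; rewrite /ident_eq => E r s tr i.
by apply: (tr _ z); [exact: (H1 E r s tr i)|exact: (H2 E r s tr i)].
Qed.

Definition ident_equiv : equiv_rel NQ :=
  EquivRel ident_rel ident_rel_refl ident_rel_sym ident_rel_trans.

Local Open Scope quotient_scope.
Definition QM : topologicalType := quotient_topology {eq_quot ident_equiv}.
End Completion.

(** Q(M) is the quotient of a disjoint union of pieces of R^n, and in each
   piece the chart range is dense (the relative boundary lies in its closure).
   Hence every nonempty open subset of Q(M) contains the image, under the
   chart-independent map M -> Q(M), x |-> [alpha(x)], of a nonempty open subset
   of M.  The image of a countable dense subset of the second countable space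
   M is therefore a countable dense subset of Q(M). *)

From HB Require Import structures.
From mathcomp Require Import all_boot all_order all_algebra generic_quotient.
From mathcomp Require Import all_classical all_reals all_analysis.

Set Implicit Arguments.
Unset Strict Implicit.
Unset Printing Implicit Defensive.
Local Open Scope classical_set_scope.
Local Open Scope quotient_scope.

Lemma second_countable_separable (T : topologicalType) :
  @second_countable T -> separable_space T.
Proof.
case=> B cB [_ Bnbhs].
have [[t0 _]|T0] := pselect (exists t : T, True); last first.
  by exists set0; split=> [|O [t _]]; [exact: countable0 | case: T0; exists t].
exists (xget t0 @` B); split; first exact: card_le_trans (card_image_le _ _) cB.
move=> O [x Ox] oO.
have [U [BU Ux] UO] := Bnbhs x O (open_nbhs_nbhs (conj oO Ox)).
have Uxget : U (xget t0 U) by apply: xgetPex; exists x.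
by exists (xget t0 U); split; [exact: UO | exists U].
Qed.

Lemma separable_space_image (S T : topologicalType) (f : S -> T) :
  (forall O : set T, open O -> O !=set0 ->
    exists2 G : set S, open G /\ G !=set0 & G `<=` f @^-1` O) ->
  separable_space S -> separable_space T.
Proof.
move=> fopen [D [cD dD]]; exists (f @` D); split.
  exact: card_le_trans (card_image_le _ _) cD.
move=> O O0 oO; have [G [oG G0] GO] := fopen O oO O0.
have [x [Gx Dx]] := dD G G0 oG.
by exists (f x); split; [exact: GO | exists x].
Qed.

Lemma rel_boundary_sub_closure (T : topologicalType) (U A : set T) :
  rel_boundary U A `<=` closure A.
Proof. by move=> x [[]]. Qed.

Section ChartPoints.
Variables (R : realType) (n : nat) (M : topologicalType).
Variables (A : set (@chart R n M)) (Q : set (@chart R n M * set (Rn R n))).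
Hypotheses (hA : maximal_smooth_atlas A) (hQ : Q `<=` extension A).

Local Notation V := (Rn R n).
Local Notation pi := (\pi_({eq_quot ident_equiv A Q})).

Lemma SQ_atlas (s : @chart R n M * set V) : SQ A Q s -> A s.1.
Proof. by case=> [[a Aa <-] // | /hQ]; case: s => a U []. Qed.

Lemma is_chart_SQ (i : SQ_index A Q) : is_chart (sq_val i).1.
Proof. by case: hA => hch _ _ _; exact/hch/SQ_atlas/sq_mem. Qed.

Lemma chart_fun_ran (a : @chart R n M) (x : M) :
  is_chart a -> ch_dom a x -> ch_ran a (ch_fun a x).
Proof. by case=> _ [_ [img _]] dx; rewrite -img; exists x. Qed.

Lemma Npiece_sub_closure (s : @chart R n M * set V) :
  Npiece s `<=` closure (ch_ran s.1).
Proof. by move=> x [/subset_closure|/rel_boundary_sub_closure]. Qed.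

Definition atlas_index (a : @chart R n M) (Aa : A a) : SQ_index A Q :=
  SQI (or_introl (ex_intro2 _ _ a Aa erefl) : SQ A Q (a, ch_ran a)).

Definition chart_point (i : SQ_index A Q) (x : M)
    (hx : ch_dom (sq_val i).1 x) : NQ A Q :=
  existT _ i (exist _ (ch_fun (sq_val i).1 x)
    (mem_set (or_introl (chart_fun_ran (is_chart_SQ i) hx)))).

Lemma chart_point_indep (i j : SQ_index A Q) (x : M)
    (hi : ch_dom (sq_val i).1 x) (hj : ch_dom (sq_val j).1 x) :
  pi (chart_point hi) = pi (chart_point hj).
Proof.
have [_ [_ [_ [invK _]]]] := is_chart_SQ i.
have rani := chart_fun_ran (is_chart_SQ i) hi.
have ranj := chart_fun_ran (is_chart_SQ j) hj.
apply/eqquotP/asboolP => E _ _ _ Eident; apply: Eident.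
rewrite /ident /NQ_index /NQ_point /=.
move: hi hj rani ranj invK; case: (sq_val i) => a U; case: (sq_val j) => b X /=.
by move=> hi hj rani ranj invK; left; rewrite /= invK.
Qed.

Definition manifold_point (x : M) : QM A Q :=
  let: exist2 a Aa hx := cid2 (let: And4 _ hcov _ _ := hA in hcov x) in
  pi (@chart_point (atlas_index Aa) x hx).

Lemma manifold_pointE (i : SQ_index A Q) (x : M)
    (hx : ch_dom (sq_val i).1 x) :
  manifold_point x = pi (chart_point hx).
Proof. by rewrite /manifold_point; case: cid2 => a Aa ha; exact: chart_point_indep. Qed.

Lemma manifold_point_open_preimage (O : set (QM A Q)) :
  open O -> O !=set0 ->
  exists2 G : set M, open G /\ G !=set0 & G `<=` manifold_point @^-1` O.
Proof.
move=> oO [q Oq].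
have Opi : (pi @^-1` O) (repr q) by rewrite /= reprK.
have /sigT_openP piO : open (pi @^-1` O) := oO.
case: (repr q) Opi => i p Opi.
have [W oW eW] := piO i.
have Wp : W (val p) by have : (existT _ i @^-1` (pi @^-1` O)) p := Opi; rewrite -eW.
have [odom [_ [_ [_ [ranK [cfun _]]]]]] := is_chart_SQ i.
have [y [rany Wy]] : exists y, ch_ran (sq_val i).1 y /\ W y.
  have [y [? ?]] := Npiece_sub_closure (set_mem (valP p))
    (open_nbhs_nbhs (conj oW Wp)).
  by exists y.
exists (ch_dom (sq_val i).1 `&` ch_fun (sq_val i).1 @^-1` W); first split.
- by apply: (continuous_inP _ odom).1 => //; rewrite -continuous_open_subspace.
- by have [domy ranKy] := ranK y rany; exists (ch_inv (sq_val i).1 y); rewrite /= ranKy.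
move=> x [domx Wx]; rewrite /= (manifold_pointE domx).
suff : (existT _ i @^-1` (pi @^-1` O)) (projT2 (chart_point domx)) by [].
by rewrite -eW.
Qed.

End ChartPoints.

Theorem mainTheorem19 (R : realType) (n : nat) (M : topologicalType)
  (hM : hausdorff_space M) (scM : @second_countable M)
  (A : set (@chart R n M)) (hA : maximal_smooth_atlas A)
  (Q : set (@chart R n M * set (Rn R n))) (hQ : Q `<=` extension A) :
  separable_space (QM A Q).
Proof.
apply: (@separable_space_image _ _ (manifold_point hA hQ)).
  exact: manifold_point_open_preimage.
exact: second_countable_separable.
Qed.
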